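(* Let $\alpha,\beta,\gamma,\Delta\in\mathbb{C}$ with $(\Delta,\beta)\neq(0,0)$. Consider extensions of conformal $\mathrm{HV}$-modules $$0\to V(\alpha,\beta,\Delta)\to E\to\mathbb{C}c_\gamma\to0,$$ realized as $E=\mathbb{C}[\partial]v_\Delta\oplus\mathbb{C}c_\gamma$ with $\mathbb{C}[\partial]v_\Delta\cong V(\alpha,\beta,\Delta)$ a submodule and $L_\lambda c_\gamma=f(\partial,\lambda)v_\Delta$, $N_\lambda c_\gamma=k(\partial,\lambda)v_\Delta$, $\partial c_\gamma=\gamma c_\gamma+a(\partial)v_\Delta$, with $f,k\in\mathbb{C}[\partial,\lambda]$, $a\in\mathbb{C}[\partial]$. Nontrivial extensions of this form exist if and only if $\alpha+\gamma=0$, $\beta=0$ and $\Delta=1$. The unique nontrivial extension is given, up to equivalence, by $k=0$ and $f(\partial,\lambda)=a(\partial)=a_0$ with $a_0\in\mathbb{C}^*$. Furthermore, all trivial extensions correspond to triples $f(\partial,\lambda)=(\alpha+\gamma+\Delta\lambda)\phi(\partial+\lambda)$, $k(\partial,\lambda)=\beta\phi(\partial+\lambda)$, $a(\partial)=(\partial-\gamma)\phi(\partial)$, with $\phi$ a polynomial.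
   Context: A conformal module over a Lie conformal algebra $R$ is a $\mathbb{C}[\partial]$-module $V$ with $a\mapsto a_\lambda\in\mathrm{End}_{\mathbb{C}}(V)\otimes\mathbb{C}[\lambda]$ satisfying $[a_\lambda,b_\mu]=[a_\lambda b]_{\lambda+\mu}$ and $(\partial a)_\lambda=[\partial,a_\lambda]=-\lambda a_\lambda$. The Heisenberg–Virasoro conformal algebra $\mathrm{HV}$ is the free $\mathbb{C}[\partial]$-module with basis $L,N$ and $\lambda$-brackets $[L_\lambda L]=(\partial+2\lambda)L$, $[L_\lambda N]=(\partial+\lambda)N$, $[N_\lambda L]=\lambda N$, $[N_\lambda N]=0$. $V(\alpha,\beta,\Delta)=\mathbb{C}[\partial]v_\Delta$ with $L_\lambda v_\Delta=(\partial+\alpha+\Delta\lambda)v_\Delta$, $N_\lambda v_\Delta=\beta v_\Delta$. $\mathbb{C}c_\gamma$ is the one-dimensional module with $\partial c_\gamma=\gamma c_\gamma$ and zero $\lambda$-actions. An extension of $W$ by $V$ is an exact sequence $0\to V\to E\to W\to0$ of conformal modules; equivalence via a module map of middle terms compatible with identities; trivial means equivalent to the direct sum. *)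

From HB Require Import structures.
From mathcomp Require Import all_boot all_order all_algebra.
From mathcomp Require Import reals complex.
Set Implicit Arguments. Unset Strict Implicit. Unset Printing Implicit Defensive.
Import Order.TTheory GRing.Theory Num.Theory.
Local Open Scope ring_scope.

(* The two C[d]-basis elements of HV. *)
Inductive hv_gen := GL | GN.

(* Underlying vector space of E: (p, z) stands for p(d) v + z c. *)
Notation extE C := ({poly C} * C^o)%type.

Section HVModules.
Variable C : fieldType.

(* Convention for two-variable polynomials  F(d, lambda) : {poly {poly C}}:
   the OUTER variable is lambda, the INNER variable is d (= \partial).      *)

(* Structure constants of HV:  [x_lambda y] = \sum_z (hv_bracket x y z)(d,lambda) z
   [L_l L] = (d + 2 l) L,  [L_l N] = (d + l) N,  [N_l L] = l N,  [N_l N] = 0. *)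
Definition hv_bracket (x y z : hv_gen) : {poly {poly C}} :=
  match x, y, z with
  | GL, GL, GL => ('X)%:P + 'X *+ 2
  | GL, GN, GN => ('X)%:P + 'X
  | GN, GL, GN => 'X
  | _, _, _ => 0
  end.

(* A candidate conformal-module structure on extE: the action of d and the
   lambda-actions of the generators, with lambda evaluated at a scalar. *)
Record Estr := MkEstr {
  Eder : extE C -> extE C;
  Eact : hv_gen -> C -> extE C -> extE C }.

(* Conformal HV-module axioms (on the C[d]-basis L, N of HV, the action of
   general elements being determined by (d a)_lambda = - lambda a_lambda):
   - d and each a_lambda are C-linear,
   - [d, a_lambda] = - lambda a_lambda,
   - [x_lambda, y_mu] = [x_lambda y]_{lambda+mu}.                           *)
Definition is_HV_module (M : Estr) : Prop :=
  [/\ (forall (r : C) (u w : extE C), Eder M (r *: u + w) = r *: Eder M u + Eder M w),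
      (forall x l (r : C) (u w : extE C),
          Eact M x l (r *: u + w) = r *: Eact M x l u + Eact M x l w),
      (forall x l (u : extE C),
          Eder M (Eact M x l u) - Eact M x l (Eder M u) = - (l *: Eact M x l u)) &
      (forall x y l m (u : extE C),
          Eact M x l (Eact M y m u) - Eact M y m (Eact M x l u)
          = \sum_(z <- [:: GL; GN])
              ((hv_bracket x y z).[l%:P]).[- (l + m)] *: Eact M z (l + m) u)].

Definition shiftp (l : C) (p : {poly C}) : {poly C} := p \Po ('X + l%:P).

(* The structure on E = C[d]v (+) C c determined by
     L_l v = (d + alpha + Delta l) v,  N_l v = beta v    (V(alpha,beta,Delta)),
     L_l c = f(d,l) v,  N_l c = k(d,l) v,  d c = gamma c + a(d) v,
   extended to all of E by C-linearity and [d, a_l] = -l a_l on C[d] v. *)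
Definition ext_struct (alpha beta gamma Delta : C)
    (f k : {poly {poly C}}) (a : {poly C}) : Estr :=
  MkEstr
    (fun u => ('X * u.1 + u.2 *: a, gamma * u.2))
    (fun x l u => match x with
       | GL => (shiftp l u.1 * ('X + (alpha + Delta * l)%:P) + u.2 *: f.[l%:P], 0)
       | GN => (beta *: shiftp l u.1 + u.2 *: k.[l%:P], 0)
       end).

Definition is_ext alpha beta gamma Delta f k a : Prop :=
  is_HV_module (ext_struct alpha beta gamma Delta f k a).

(* Equivalence of extensions: a module map of middle terms compatible with
   the identity on V (inclusion) and on C c_gamma (projection). *)
Definition ext_equiv (M1 M2 : Estr) : Prop :=
  exists g : extE C -> extE C,
    [/\ (forall (r : C) (u w : extE C), g (r *: u + w) = r *: g u + g w),
        (forall u, g (Eder M1 u) = Eder M2 (g u)),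
        (forall x l u, g (Eact M1 x l u) = Eact M2 x l (g u)),
        (forall p : {poly C}, g (p, 0) = (p, 0)) &
        (forall u, (g u).2 = u.2)].

(* Trivial extension: equivalent to the direct sum V(alpha,beta,Delta) (+) C c_gamma,
   which in this realisation is the data f = k = 0, a = 0. *)
Definition ext_trivial alpha beta gamma Delta f k a : Prop :=
  ext_equiv (ext_struct alpha beta gamma Delta 0 0 0)
            (ext_struct alpha beta gamma Delta f k a).

(* phi(d + lambda) as a two-variable polynomial (outer lambda, inner d). *)
Definition shift2 (phi : {poly C}) : {poly {poly C}} :=
  (map_poly (fun c : C => c%:P%:P) phi).[('X)%:P + 'X].

End HVModules.

From HB Require Import structures.
From mathcomp Require Import all_boot all_order all_algebra.
From mathcomp Require Import reals complex.
From mathcomp Require Import ring.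
Set Implicit Arguments. Unset Strict Implicit. Unset Printing Implicit Defensive.
Import Order.TTheory GRing.Theory Num.Theory.
Local Open Scope ring_scope.

(* A module map of extensions that is the identity on V and on C c has the
   form u |-> u + u.2 phi(d) v, and it changes the data (f, k, a) by the
   coboundary (phi(d + l) (d + alpha + Delta l), beta phi(d + l), (d - gamma) phi).
   The relation [d, x_l] = - l x_l applied to c gives
   (d + l - gamma) f(d, l) = a(d + l) (d + alpha + Delta l) and
   (d + l - gamma) k(d, l) = beta a(d + l).  Hence if a(gamma) = 0 then
   (f, k, a) is the coboundary of a / (d - gamma) and the extension is trivial,
   while a(gamma) is invariant under coboundaries, so the extension is trivial
   exactly when a(gamma) = 0.  If a(gamma) <> 0, evaluating the first relation
   at d = gamma - l gives gamma - l + alpha + Delta l = 0 for all l, and the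
   second gives beta = 0; writing a = a(gamma) + (d - gamma) psi and removing
   the coboundary of psi leaves f = a = a(gamma), k = 0. *)

Section Shift.
Variable C : fieldType.
Implicit Types (l m : C) (p q : {poly C}).

Lemma shiftp0 l : shiftp l 0 = 0.
Proof. exact: comp_poly0. Qed.

Lemma shiftpD l p q : shiftp l (p + q) = shiftp l p + shiftp l q.
Proof. exact: comp_polyD. Qed.

Lemma shiftpZ l (r : C) p : shiftp l (r *: p) = r *: shiftp l p.
Proof. exact: comp_polyZ. Qed.

Lemma shiftpN l p : shiftp l (- p) = - shiftp l p.
Proof. by rewrite -scaleN1r shiftpZ scaleN1r. Qed.

Lemma shiftpM l p q : shiftp l (p * q) = shiftp l p * shiftp l q.
Proof. exact: comp_polyM. Qed.

Lemma shiftpC l (c : C) : shiftp l c%:P = c%:P.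
Proof. exact: comp_polyC. Qed.

Lemma shiftpX l : shiftp l 'X = 'X + l%:P.
Proof. exact: comp_polyX. Qed.

Lemma shiftp_shiftp l m p : shiftp l (shiftp m p) = shiftp (l + m) p.
Proof.
rewrite /shiftp -comp_polyA comp_polyD comp_polyX comp_polyC.
by rewrite polyCD addrA.
Qed.

Definition shiftpE := (shiftp0, shiftpD, shiftpN, shiftpZ, shiftpM, shiftpC, shiftpX, shiftp_shiftp).

Lemma horner_shiftp l p x : (shiftp l p).[x] = p.[x + l].
Proof. by rewrite horner_comp hornerD hornerX hornerC. Qed.

Lemma horner_shift2 (phi : {poly C}) l : (shift2 phi).[l%:P] = shiftp l phi.
Proof.
rewrite /shift2 /shiftp -[LHS]/(horner_eval l%:P _) -horner_map /=.
rewrite {2}/horner_eval hornerD hornerC hornerX -map_poly_comp.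
by congr (_.[_]); apply: eq_map_poly => c /=; rewrite /horner_eval hornerC.
Qed.

End Shift.

Lemma scale_regularE (R : pzSemiRingType) (a : R) (x : R^o) : a *: x = a * x.
Proof. by []. Qed.

Lemma eq_of_subr_eq (V : zmodType) (x y u v : V) : u = v -> x - y = u - v -> x = y.
Proof. by move=> -> /eqP; rewrite subrr subr_eq0 => /eqP. Qed.

Section Transport.
Variable C : fieldType.
Implicit Types (M : Estr C) (g h : extE C -> extE C).

Lemma is_HV_module_conj M1 M2 g h :
  (forall (r : C) u w, g (r *: u + w) = r *: g u + g w) ->
  cancel h g -> cancel g h ->
  (forall u, Eder M2 u = g (Eder M1 (h u))) ->
  (forall x l u, Eact M2 x l u = g (Eact M1 x l (h u))) ->
  is_HV_module M1 -> is_HV_module M2.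
Proof.
move=> g_lin hK gK der2 act2 [der_lin act_lin der_act act_act].
have gD u w : g (u + w) = g u + g w by rewrite -(scale1r u) g_lin !scale1r.
have gZ r u : g (r *: u) = r *: g u.
  by apply: (addIr (g 0)); rewrite -gD -g_lin addr0.
have gN u : g (- u) = - g u by rewrite -scaleN1r gZ scaleN1r.
have h_lin r u w : h (r *: u + w) = r *: h u + h w.
  by rewrite -{1}[u]hK -{1}[w]hK -g_lin gK.
split.
- by move=> r u w; rewrite !der2 h_lin der_lin g_lin.
- by move=> x l r u w; rewrite !act2 h_lin act_lin g_lin.
- by move=> x l u; rewrite !der2 !act2 !gK -gN -gZ -gD der_act.
- move=> x y l m u; rewrite !act2 !gK -gN -gD act_act.
  by rewrite !big_cons !big_nil !addr0 gD !gZ !act2.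
Qed.

Lemma ext_equiv_mapE g :
  (forall (r : C) u w, g (r *: u + w) = r *: g u + g w) ->
  (forall p : {poly C}, g (p, 0) = (p, 0)) -> (forall u, (g u).2 = u.2) ->
  forall u, g u = (u.1 + u.2 *: (g (0, 1)).1, u.2).
Proof.
move=> g_lin g_V g_c [p z].
have -> : (p, z) = z *: (0, 1) + (p, 0) :> extE C.
  by congr (_, _); rewrite /= ?scaler0 ?add0r ?addr0 // [z *: 1]mulr1.
rewrite g_lin g_V; case E : (g (0, 1)) => [q y].
have -> : y = 1 by have := g_c (0, 1); rewrite E.
by congr (_, _); rewrite /= ?scaler0 ?add0r ?addr0 ?[z *: 1]mulr1 // addrC.
Qed.

Lemma ext_equiv_module M1 M2 : ext_equiv M1 M2 -> is_HV_module M1 -> is_HV_module M2.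
Proof.
case=> g [g_lin g_der g_act g_V g_c].
have gE := ext_equiv_mapE g_lin g_V g_c; set phi := (g (0, 1)).1 in gE.
pose h (u : extE C) : extE C := (u.1 - u.2 *: phi, u.2).
have hK : cancel h g by move=> u; rewrite gE /h /= subrK; case: u.
have gK : cancel g h by move=> u; rewrite gE /h /= addrK; case: u.
apply: (is_HV_module_conj g_lin hK gK) => [u | x l u].
  by rewrite g_der hK.
by rewrite g_act hK.
Qed.

End Transport.

Section Extensions.
Variables (C : fieldType) (alpha beta gamma Delta : C).
Implicit Types (f k : {poly {poly C}}) (a phi : {poly C}).
Local Notation ext := (ext_struct alpha beta gamma Delta).

Local Ltac ext_ring :=
  rewrite /= ?hornerC ?horner0 ?scaler0 ?scale_regularE ?shiftpE -?mul_polyC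
          ?oppr0 ?addr0 //; ring.

(* [f2, k2, a2] describe [ext f1 k1 a1] in the basis [v], [c - phi(d) v]. *)
Definition cohomologous_via phi f1 k1 a1 f2 k2 a2 : Prop :=
  [/\ a2 = a1 - ('X - gamma%:P) * phi,
      forall l, f2.[l%:P] = f1.[l%:P] - shiftp l phi * ('X + (alpha + Delta * l)%:P) &
      forall l, k2.[l%:P] = k1.[l%:P] - beta *: shiftp l phi].

Lemma ext_equivP f1 k1 a1 f2 k2 a2 :
  ext_equiv (ext f1 k1 a1) (ext f2 k2 a2) <->
  exists phi, cohomologous_via phi f1 k1 a1 f2 k2 a2.
Proof.
split=> [[g [g_lin g_der g_act g_V g_c]] | [phi [a_eq f_eq k_eq]]].
  have gE := ext_equiv_mapE g_lin g_V g_c; set phi := (g (0, 1)).1 in gE.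
  exists phi; split=> [|l|l].
  - have := g_der (0, 1); rewrite !gE => /(congr1 fst) E.
    by apply/esym/(eq_of_subr_eq E); ext_ring.
  - have := g_act GL l (0, 1); rewrite !gE => /(congr1 fst) E.
    by apply/esym/(eq_of_subr_eq E); ext_ring.
  - have := g_act GN l (0, 1); rewrite !gE => /(congr1 fst) E.
    by apply/esym/(eq_of_subr_eq E); ext_ring.
exists (fun u => (u.1 + u.2 *: phi, u.2)); split=> /=.
- by move=> r [p z] [q y]; congr (_, _); rewrite /= scalerDr scalerDl scalerA; ext_ring.
- by move=> [p z]; congr (_, _); rewrite /= a_eq; ext_ring.
- move=> [] l [p z]; congr (_, _); rewrite /= ?scale0r ?addr0 //.
    by rewrite f_eq; ext_ring.
  by rewrite k_eq; ext_ring.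
- by move=> p; rewrite scale0r addr0.
- by [].
Qed.

Lemma hv_bracketE x y z l m : (hv_bracket C x y z).[l%:P].[- (l + m)] =
  match x, y, z with
  | GL, GL, GL => l - m
  | GL, GN, GN => - m
  | GN, GL, GN => l
  | _, _, _ => 0
  end.
Proof. by case: x; case: y; case: z; rewrite /= ?horner0 // !hornerE /=; ring. Qed.

Local Ltac check_HV_module :=
  split=> [r [p z] [q y] | [] l r [p z] [q y] | [] l [p z] | [] [] l m [p z]];
  rewrite ?big_cons ?big_nil ?addr0 ?hv_bracketE; congr (_, _);
  rewrite /= ?shiftpE;
  (* the two orders of composition shift by [l + m] and by [m + l] *)
  try match goal with |- context [shiftp (?m + ?l) _] => rewrite [m + l]addrC end;
  ext_ring.

Lemma is_ext_split : is_ext alpha beta gamma Delta 0 0 0.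
Proof. check_HV_module. Qed.

Lemma is_ext_const (a0 : C) : alpha + gamma = 0 -> beta = 0 -> Delta = 1 ->
  is_ext alpha beta gamma Delta a0%:P%:P 0 a0%:P.
Proof. by move=> /eqP; rewrite addr_eq0 => /eqP -> -> ->; check_HV_module. Qed.

Lemma ext_commutator_c f k a : is_ext alpha beta gamma Delta f k a -> forall l,
  ('X + (l - gamma)%:P) * f.[l%:P] = shiftp l a * ('X + (alpha + Delta * l)%:P) /\
  ('X + (l - gamma)%:P) * k.[l%:P] = beta *: shiftp l a.
Proof.
case=> _ _ der_act _ l; split.
  have := der_act GL l (0, 1) => /(congr1 fst) E.
  by apply: (eq_of_subr_eq E); ext_ring.
have := der_act GN l (0, 1) => /(congr1 fst) E.
by apply: (eq_of_subr_eq E); ext_ring.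
Qed.

Lemma ext_trivialP f k a : is_ext alpha beta gamma Delta f k a ->
  ext_trivial alpha beta gamma Delta f k a <-> root a gamma.
Proof.
move=> ext; split=> [/ext_equivP [phi [-> _ _]] | /factor_theorem [psi a_eq]].
  by rewrite rootE !hornerE subrr mul0r oppr0.
apply/ext_equivP; exists (- psi); split=> [|l|l]; first by rewrite a_eq; ring.
all: have [f_rel k_rel] := ext_commutator_c ext l; rewrite a_eq !shiftpE in f_rel k_rel.
all: apply: (mulfI (monic_neq0 (monicXaddC (l - gamma)))).
  by rewrite f_rel; ext_ring.
by rewrite k_rel; ext_ring.
Qed.

Lemma ext_nontrivial_params f k a : is_ext alpha beta gamma Delta f k a ->
  ~~ root a gamma -> [/\ alpha + gamma = 0, beta = 0 & Delta = 1].
Proof.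
rewrite rootE => ext a_gamma_neq0.
have at_root l :
    a.[gamma] * (gamma - l + (alpha + Delta * l)) = 0 /\ beta * a.[gamma] = 0.
  have [f_rel k_rel] := ext_commutator_c ext l.
  have := congr1 (horner^~ (gamma - l)) k_rel; have := congr1 (horner^~ (gamma - l)) f_rel.
  rewrite /= !hornerM hornerZ !(hornerD, hornerX, hornerC) horner_shiftp subrK.
  by rewrite subrKA subrr !mul0r => <- <-.
have cancel_a x : a.[gamma] * x = 0 -> x = 0.
  by move/eqP; rewrite mulf_eq0 (negbTE a_gamma_neq0) => /eqP.
have [/cancel_a E0 beta_a] := at_root 0; have [/cancel_a E1 _] := at_root 1.
move: E0 E1 beta_a; rewrite !subr0 !mulr0 !addr0 !mulr1 mulrC => E0 E1 /cancel_a beta0.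
split=> //; first by rewrite addrC.
have -> : Delta = (gamma - 1 + (alpha + Delta)) - (gamma + alpha) + 1 by ring.
by rewrite E1 E0 subrr add0r.
Qed.

Lemma ext_equiv_const f k a : is_ext alpha beta gamma Delta f k a ->
  alpha + gamma = 0 -> beta = 0 -> Delta = 1 ->
  ext_equiv (ext a.[gamma]%:P%:P 0 a.[gamma]%:P) (ext f k a).
Proof.
move=> ext /eqP; rewrite addr_eq0 => /eqP alpha_eq beta0 Delta1.
have /factor_theorem [psi a_sub] : root (a - a.[gamma]%:P) gamma.
  by rewrite rootE !hornerE subrr.
have a_eq : a = a.[gamma]%:P + psi * ('X - gamma%:P) by rewrite -a_sub addrC subrK.
apply/ext_equivP; exists (- psi); split=> [|l|l]; first by rewrite {1}a_eq; ring.
all: have [f_rel k_rel] := ext_commutator_c ext l.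
all: rewrite alpha_eq beta0 Delta1 in f_rel k_rel *; rewrite a_eq !shiftpE in f_rel k_rel.
all: apply: (mulfI (monic_neq0 (monicXaddC (l - gamma)))).
  by rewrite f_rel; ext_ring.
by rewrite k_rel; ext_ring.
Qed.

End Extensions.

Section CharZero.
Variable C : numFieldType.

Lemma poly_horner_eq0 (p : {poly C}) : (forall x, p.[x] = 0) -> p = 0.
Proof.
move=> p_vanish; apply/eqP/negPn/negP => p_neq0.
have roots : all (root p) (mkseq (fun i => i%:R) (size p)).
  by apply/allP => x _; apply/rootP.
have uniq_roots : uniq (mkseq (fun i => (i%:R : C)) (size p)).
  by rewrite map_inj_uniq ?iota_uniq // => i j /eqP; rewrite eqr_nat => /eqP.
by have := max_poly_roots p_neq0 roots uniq_roots; rewrite size_mkseq ltnn.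
Qed.

Lemma polyXY_eq_hornerC (P Q : {poly {poly C}}) :
  (forall l : C, P.[l%:P] = Q.[l%:P]) -> P = Q.
Proof.
move=> PQ; apply/subr0_eq/eqP; rewrite -swapXY_eq0; apply/eqP/polyP => j.
rewrite coef0; apply: poly_horner_eq0 => l.
have := congr1 (fun q : {poly C} => q`_j) (horner_polyC (P - Q) l).
by rewrite coef_map /= hornerD hornerN PQ subrr coef0.
Qed.

Variables alpha beta gamma Delta : C.

Lemma ext_trivial_dataP f k a :
  (is_ext alpha beta gamma Delta f k a /\ ext_trivial alpha beta gamma Delta f k a)
  <-> exists phi : {poly C},
      [/\ f = (('X)%:P + (alpha%:P)%:P + Delta%:P *: 'X) * shift2 phi,
          k = (beta%:P)%:P * shift2 phi &
          a = ('X - gamma%:P) * phi].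
Proof.
have horner_f phi l : ((('X)%:P + (alpha%:P)%:P + Delta%:P *: 'X) * shift2 phi).[l%:P]
    = shiftp l phi * ('X + (alpha + Delta * l)%:P).
  by rewrite hornerM horner_shift2 !hornerE; ring.
have horner_k phi l : ((beta%:P)%:P * shift2 phi).[l%:P] = beta *: shiftp l phi.
  by rewrite hornerM horner_shift2 hornerC mul_polyC.
split=> [[_ /ext_equivP [phi [a_eq f_eq k_eq]]] | [psi [-> -> ->]]].
  exists (- phi); split; last by rewrite a_eq; ring.
  - apply: polyXY_eq_hornerC => l.
    by rewrite f_eq horner_f horner0 shiftpN; ring.
  - apply: polyXY_eq_hornerC => l.
    by rewrite k_eq horner_k horner0 shiftpN -!mul_polyC; ring.
have trivial : ext_trivial alpha beta gamma Delta
    ((('X)%:P + (alpha%:P)%:P + Delta%:P *: 'X) * shift2 psi)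
    ((beta%:P)%:P * shift2 psi) (('X - gamma%:P) * psi).
  apply/ext_equivP; exists (- psi); split=> [|l|l]; first ring.
    by rewrite horner_f horner0 shiftpN; ring.
  by rewrite horner_k horner0 shiftpN -!mul_polyC; ring.
split=> //; exact: ext_equiv_module trivial (is_ext_split _ _ _ _).
Qed.

End CharZero.

Theorem corollary6p2 (R : realType) (alpha beta gamma Delta : complex R) :
  (Delta, beta) != (0, 0) ->
  [/\ (* existence of nontrivial extensions *)
      (exists (f k : {poly {poly complex R}}) (a : {poly complex R}),
          is_ext alpha beta gamma Delta f k a
          /\ ~ ext_trivial alpha beta gamma Delta f k a)
        <-> [/\ alpha + gamma = 0, beta = 0 & Delta = 1],
      (* the nontrivial extensions, up to equivalence *)
      (alpha + gamma = 0 -> beta = 0 -> Delta = 1 ->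
         (forall a0 : complex R, a0 != 0 ->
            is_ext alpha beta gamma Delta a0%:P%:P 0 a0%:P
            /\ ~ ext_trivial alpha beta gamma Delta a0%:P%:P 0 a0%:P)
         /\ (forall f k a, is_ext alpha beta gamma Delta f k a ->
               ~ ext_trivial alpha beta gamma Delta f k a ->
               exists2 a0 : complex R, a0 != 0 &
                 ext_equiv (ext_struct alpha beta gamma Delta a0%:P%:P 0 a0%:P)
                           (ext_struct alpha beta gamma Delta f k a))) &
      (* description of the trivial extensions *)
      forall f k a,
        (is_ext alpha beta gamma Delta f k a
         /\ ext_trivial alpha beta gamma Delta f k a)
        <-> exists phi : {poly complex R},
              [/\ f = (('X)%:P + (alpha%:P)%:P + Delta%:P *: 'X) * shift2 phi,
                  k = (beta%:P)%:P * shift2 phi &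
                  a = ('X - gamma%:P) * phi]].
Proof.
move=> _; split=> [| alpha_gamma beta0 Delta1 | f k a]; last exact: ext_trivial_dataP.
- split=> [[f [k [a [ext nontrivial]]]] | [alpha_gamma beta0 Delta1]].
    by apply: (ext_nontrivial_params ext); apply/negP; rewrite -(ext_trivialP ext).
  exists 1%:P%:P, 0, 1%:P; split; first exact: is_ext_const.
  by rewrite ext_trivialP ?rootE ?hornerC ?oner_eq0 //; exact: is_ext_const.
- split=> [a0 a0_neq0 | f k a ext nontrivial].
    have ext := is_ext_const a0 alpha_gamma beta0 Delta1.
    by split=> //; rewrite ext_trivialP // rootE hornerC; exact/negP.
  exists a.[gamma]; last exact: ext_equiv_const.
  by rewrite -rootE; apply/negP; rewrite -(ext_trivialP ext).
Qed.
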